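(* Let $\mathfrak F=(X,\parallel,Y,S_\vee)$ be a frame satisfying (F0)–(F4). The following are equivalent: (1) the incompatibility relation $\perp$ is symmetric; (2) $A\subseteq A^{**}$ for every $A\in\mathcal G(X)$; (3) $A^*=A^{\triangle}$ for every $A\in\mathcal G(X)$, where $A^\triangle=\{x\in X:\overline\eta_S(\Gamma x)\subseteq A'\}$.
   Context: Polarity $(X,\parallel,Y)$, ${\parallel}\subseteq X\times Y$, $I$ its complement. $U'=\{y:\forall x\in U\;x\parallel y\}$ for $U\subseteq X$, $V'=\{x:\forall y\in V\;x\parallel y\}$ for $V\subseteq Y$; stable sets $A=A''\subseteq X$ form $\mathcal G(X)$, co-stable sets $B=B''\subseteq Y$ form $\mathcal G(Y)$ (joins $(\bigcup A_j)''$). $x\preceq z$ iff $\{x\}'\subseteq\{z\}'$, similarly on $Y$; separated means these are partial orders; $\Gamma u$ is the up-set of $u$; closed elements are the sets $\Gamma u$. Frame $(X,\parallel,Y,S_\vee)$, $S_\vee\subseteq Y\times X$, $S_\vee x=\{y:yS_\vee x\}$, $yS_\vee=\{x:yS_\vee x\}$, $zS'_\vee x$ iff $\forall y(yS_\vee x\Rightarrow z\parallel y)$. Axioms (F0) $\forall x\exists y\,xIy$, $\forall y\exists x\,xIy$; (F1) separated; (F2) each $S_\vee x$ a closed element of $\mathcal G(Y)$; (F3) each $yS_\vee$ a down-set; (F4) for each $x$, $\{z:zS'_\vee x\}\in\mathcal G(X)$, for each $z$, $\{x:zS'_\vee x\}\in\mathcal G(X)$. $x\perp z$ iff $xS'_\vee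 z$; $A^*=\{x:\forall z\in A\;x\perp z\}$; $\overline\eta_S(A)=(\bigcup_{x\in A}S_\vee x)''$. *)

Set Implicit Arguments.

Section Frames.
Variables (X Y : Type) (par : X -> Y -> Prop) (S : Y -> X -> Prop).

Definition seteq {T : Type} (A B : T -> Prop) : Prop := forall t, A t <-> B t.
Definition subset {T : Type} (A B : T -> Prop) : Prop := forall t, A t -> B t.

Definition primeX (U : X -> Prop) : Y -> Prop := fun y => forall x, U x -> par x y.
Definition primeY (V : Y -> Prop) : X -> Prop := fun x => forall y, V y -> par x y.

Definition stableX (A : X -> Prop) : Prop := seteq A (primeY (primeX A)).
Definition costableY (B : Y -> Prop) : Prop := seteq B (primeX (primeY B)).

Definition singX (x : X) : X -> Prop := fun u => u = x.
Definition singY (y : Y) : Y -> Prop := fun v => v = y.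

Definition leX (x z : X) : Prop := subset (primeX (singX x)) (primeX (singX z)).
Definition leY (y v : Y) : Prop := subset (primeY (singY y)) (primeY (singY v)).

Definition GammaX (x : X) : X -> Prop := fun z => leX x z.
Definition GammaY (y : Y) : Y -> Prop := fun v => leY y v.

Definition Sx (x : X) : Y -> Prop := fun y => S y x.
Definition yS (y : Y) : X -> Prop := fun x => S y x.

Definition Sprime (z x : X) : Prop := forall y, S y x -> par z y.

Definition F0 : Prop :=
  (forall x, exists y, ~ par x y) /\ (forall y, exists x, ~ par x y).
Definition F1 : Prop :=
  (forall x z, leX x z -> leX z x -> x = z) /\
  (forall y v, leY y v -> leY v y -> y = v).
Definition F2 : Prop := forall x, exists y, seteq (Sx x) (GammaY y).
Definition F3 : Prop := forall y x z, leX x z -> yS y z -> yS y x.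
Definition F4 : Prop :=
  (forall x, stableX (fun z => Sprime z x)) /\
  (forall z, stableX (fun x => Sprime z x)).

Definition frame_axioms : Prop := F0 /\ F1 /\ F2 /\ F3 /\ F4.

Definition perp (x z : X) : Prop := Sprime x z.

Definition star (A : X -> Prop) : X -> Prop := fun x => forall z, A z -> perp x z.

Definition etaS (A : X -> Prop) : Y -> Prop :=
  primeX (primeY (fun y => exists x, A x /\ S y x)).

Definition triangle (A : X -> Prop) : X -> Prop :=
  fun x => subset (etaS (GammaX x)) (primeX A).

End Frames.


(* The set of elements incompatible with x is stable by (F4), and x lies in its
   star.  So both (2) and (3), applied to it, give back the symmetry of the
   incompatibility relation.  Conversely, by (F3) the triangle of A consists of
   exactly the x with a ⊥ x for all a in A, which under symmetry is A^*. *)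

Section Incompatibility.
Context {X Y : Type} {par : X -> Y -> Prop} {S : Y -> X -> Prop}.

Notation perp := (perp par S).
Notation star := (star par S).
Notation triangle := (triangle par S).

Definition perp_symmetric : Prop := forall x z : X, perp x z -> perp z x.

Lemma stableX_perp : F4 par S -> forall x, stableX par (perp x).
Proof. intros [_ F4b] x. exact (F4b x). Qed.

Lemma perp_in_star_perp (x : X) : star (perp x) x.
Proof. intros z Hz. exact Hz. Qed.

Lemma sub_star_star (A : X -> Prop) : perp_symmetric -> subset A (star (star A)).
Proof. intros Hsym a Ha z Hz. apply Hsym, Hz, Ha. Qed.

Lemma S_etaS_GammaX (x : X) (y : Y) : S y x -> etaS par S (GammaX par x) y.
Proof.
  intros Hy w Hw. apply Hw. exists x. split; [intros t Ht; exact Ht | exact Hy].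
Qed.

Lemma triangleP (A : X -> Prop) (x : X) :
  F3 par S -> triangle A x <-> (forall a, A a -> perp a x).
Proof.
  intros HF3; split.
  - intros Hx a Ha y Hy. exact (Hx y (S_etaS_GammaX x y Hy) a Ha).
  - intros Hx y Hy a Ha. apply Hy.
    intros y' [u [Hxu Hy']]. exact (Hx a Ha y' (HF3 y' x u Hxu Hy')).
Qed.

Lemma star_triangle (A : X -> Prop) :
  F3 par S -> perp_symmetric -> seteq (star A) (triangle A).
Proof.
  intros HF3 Hsym x. split.
  - intros Hx. apply triangleP; [exact HF3 |]. intros a Ha. apply Hsym, Hx, Ha.
  - intros Hx a Ha. apply Hsym. exact (proj1 (triangleP A x HF3) Hx a Ha).
Qed.

Lemma perp_sym_of_star_star :
  F4 par S -> (forall A, stableX par A -> subset A (star (star A))) -> perp_symmetric.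
Proof.
  intros HF4 H x z Hxz.
  exact (H (perp x) (stableX_perp HF4 x) z Hxz x (perp_in_star_perp x)).
Qed.

Lemma perp_sym_of_star_triangle :
  F3 par S -> F4 par S ->
  (forall A, stableX par A -> seteq (star A) (triangle A)) -> perp_symmetric.
Proof.
  intros HF3 HF4 H x z Hxz.
  assert (Htri : triangle (perp x) x).
  { apply (H (perp x) (stableX_perp HF4 x)), perp_in_star_perp. }
  exact (proj1 (triangleP _ x HF3) Htri z Hxz).
Qed.

End Incompatibility.

Theorem lemma3p16 (X Y : Type) (par : X -> Y -> Prop) (S : Y -> X -> Prop) :
  frame_axioms par S ->
  ((forall x z : X, perp par S x z -> perp par S z x) <->
   (forall A : X -> Prop, stableX par A -> subset A (star par S (star par S A)))) /\
  ((forall x z : X, perp par S x z -> perp par S z x) <->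
   (forall A : X -> Prop, stableX par A -> seteq (star par S A) (triangle par S A))).
Proof.
  intros [_ [_ [_ [HF3 HF4]]]].
  split; split.
  - intros Hsym A _. exact (sub_star_star A Hsym).
  - exact (perp_sym_of_star_star HF4).
  - intros Hsym A _. exact (star_triangle A HF3 Hsym).
  - exact (perp_sym_of_star_triangle HF3 HF4).
Qed.
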